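(* In Ruleset C', let $G=\langle \mathrm{Nim}(i_1),\ldots,\mathrm{Nim}(i_\ell)\rangle_{C'}$ and $k=\max_{1\le j\le\ell} i_j$. Then, taking the first applicable case, \[G\equiv\begin{cases} 0 & \text{if } G=\langle\mathrm{Nim}(1),\mathrm{Nim}(2)\rangle_{C'} \text{ or } G=\langle\mathrm{Nim}(0),\mathrm{Nim}(1),\mathrm{Nim}(2)\rangle_{C'},\\ * & \text{if } k=1,\\ *(k-1) & \text{if } k-1\in\{i_1,\ldots,i_\ell\},\\ *k & \text{otherwise.}\end{cases}\] Equivalently: $G$ has value $*k$ unless $\mathrm{Nim}(k-1)$ belongs to the superposition, in which case it has value $*(k-1)$, with the only exceptions $\langle\mathrm{Nim}(0),\mathrm{Nim}(1)\rangle_{C'}\equiv *$ and $\langle\mathrm{Nim}(1),\mathrm{Nim}(2)\rangle_{C'}\equiv 0$ (and likewise $\langle\mathrm{Nim}(0),\mathrm{Nim}(1),\mathrm{Nim}(2)\rangle_{C'}\equiv 0$).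
   Context: Single-heap Nim: $\mathrm{Nim}(x)$ is a heap of $x$ tokens; classical move $(1,-j)$, $j\ge1$, removes $j$ tokens and is illegal if fewer than $j$ tokens remain. Quantum variation: a position is a nonempty finite set $\langle G_1,\ldots,G_n\rangle$ of distinct classical positions; a classical move is legal if legal in some $G_i$; a Q-move is a nonempty set of legal classical moves, leading to the superposition of all legal results of applying one of its moves to one of the $G_i$. Ruleset C' (subscript $C'$): Q-moves of at least two distinct classical moves are allowed; an unsuperposed (single) move is allowed if and only if it is legal in every $G_i$ in which the player still has at least one legal classical move. The player with no allowed Q-move loses. $\equiv$ is game equivalence, $*k$ the value of a classical Nim heap of $k$ tokens, $*=*1$, $*0=0$. *)

From mathcomp Require Import all_boot.
Set Implicit Arguments. Unset Strict Implicit. Unset Printing Implicit Defensive.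

(* A (quantum) position <Nim(i_1),...,Nim(i_l)> is represented by the list
   S = [:: i_1; ...; i_l] of heap sizes (nonempty, duplicate-free);
   only membership matters. *)

Definition hmax (S : seq nat) : nat := foldr maxn 0 S.

(* classical move j is legal in the superposition S: legal in some G_i *)
Definition legal_move (S : seq nat) (j : nat) : bool := (0 < j) && (j <= hmax S).

(* result of the Q-move M (a set of classical moves, as a list): the
   superposition of all legal results of applying one move of M to one G_i *)
Definition qresult (S M : seq nat) : seq nat :=
  undup [seq i - j | i <- S, j <- [seq j <- M | j <= i]].

(* Ruleset C': Q-moves with at least two distinct classical moves are allowed;
   an unsuperposed move j is allowed iff it is legal in every G_i in which the
   player still has a legal classical move (i.e. every i >= 1). *)
Definition allowedC' (S M : seq nat) : bool :=
  [&& M != [::], uniq M, all (legal_move S) M &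
   (if M is [:: j] then all (fun i => (0 < i) ==> (j <= i)) S else true)].

Fixpoint subseqs (s : seq nat) : seq (seq nat) :=
  if s is x :: s' then let r := subseqs s' in r ++ map (cons x) r else [:: [::]].

Definition qmoves (S : seq nat) : seq (seq nat) :=
  [seq M <- subseqs (iota 1 (hmax S)) | allowedC' S M].

Definition mex (s : seq nat) : nat :=
  nth 0 [seq n <- iota 0 (size s).+1 | n \notin s] 0.

(* Grundy value with fuel; every Q-move strictly decreases hmax, so fuel
   (hmax S).+1 suffices *)
Fixpoint grundy_fuel (f : nat) (S : seq nat) : nat :=
  if f is f'.+1 then mex [seq grundy_fuel f' (qresult S M) | M <- qmoves S]
  else 0.

(* Grundy value of the position S; by Sprague-Grundy, S is equivalent to
   *(grundy S). *)
Definition grundy (S : seq nat) : nat := grundy_fuel (hmax S).+1 S.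

From mathcomp Require Import all_boot zify.
Set Implicit Arguments. Unset Strict Implicit. Unset Printing Implicit Defensive.

(* Write k for the largest heap of S and b for whether Nim(k-1) occurs in S.
   Every allowed Q-move contains a move j >= 1, so it lowers k, and the Grundy
   value is computed by induction on k: it equals [qnim k b], that is k-1 when b
   holds and k otherwise, apart from the small cases k <= 2.
   Every smaller value is reached: the Q-move {k-m, k} is always allowed and
   leads to a superposition with largest heap m that contains m-1 exactly when S
   contains k-1; the value 0 also comes from {k-2, k-1}, or for k <= 2 from the
   single move k.
   No option has the value of S: its largest heap is below k, so only the value
   k-1 (when b holds) could repeat, which needs largest heap k-1, hence the move
   1; but then the option also contains k-2, which lowers its value.  For k = 2
   the rule on unsuperposed moves forbids the single move 2 once Nim(1) is
   present, which makes <Nim(1), Nim(2)> a zero position. *)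

Lemma leq_hmax (s : seq nat) x : x \in s -> x <= hmax s.
Proof.
elim: s => //= y s IH; rewrite inE leq_max => /predU1P[->|/IH ->].
  by rewrite leqnn.
by rewrite orbT.
Qed.

Lemma hmax_leq (s : seq nat) n : (forall x, x \in s -> x <= n) -> hmax s <= n.
Proof.
elim: s => //= y s IH le_sn; rewrite geq_max le_sn ?mem_head // IH // => x xs.
by rewrite le_sn // inE xs orbT.
Qed.

Lemma hmax_mem (s : seq nat) : 0 < hmax s -> hmax s \in s.
Proof.
elim: s => //= y s IH; rewrite inE /maxn; case: (ltnP y (hmax s)) => [lt_ys _|_ _].
  by rewrite IH ?orbT // (leq_ltn_trans _ lt_ys).
by rewrite eqxx.
Qed.

Lemma eq_hmax (s t : seq nat) : s =i t -> hmax s = hmax t.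
Proof.
move=> eq_st; apply/eqP; rewrite eqn_leq.
by apply/andP; split; apply: hmax_leq => x xs; apply: leq_hmax; rewrite ?eq_st // -eq_st.
Qed.

Lemma mex_eq (s : seq nat) v : (forall u, u < v -> u \in s) -> v \notin s -> mex s = v.
Proof.
move=> below_s vNs.
have le_v_size : v <= size s.
  have: size (iota 0 v) <= size (undup s).
    apply: uniq_leq_size; first exact: iota_uniq.
    by move=> x; rewrite mem_iota mem_undup => /andP[_ /below_s].
  by rewrite size_iota => /leq_trans; apply; apply: size_undup.
rewrite /mex -(subnKC le_v_size) -addnS iotaD filter_cat add0n.
rewrite (@eq_in_filter _ _ pred0) ?filter_pred0 /= ?vNs // => x.
by rewrite mem_iota => /andP[_ x_lt_v]; rewrite below_s.
Qed.

Lemma qresultP (S M : seq nat) x :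
  reflect (exists i j, [/\ i \in S, j \in M, j <= i & x = i - j]) (x \in qresult S M).
Proof.
rewrite mem_undup; apply: (iffP allpairsPdep).
  by move=> [i [j [iS]]]; rewrite mem_filter => /andP[le_ji jM] ->; exists i, j.
by move=> [i [j [iS jM le_ji ->]]]; exists i, j; rewrite mem_filter le_ji jM.
Qed.

Lemma hmax_qresult_leq (S M : seq nat) m :
  (forall j, j \in M -> m <= j) -> hmax (qresult S M) <= hmax S - m.
Proof.
move=> ge_m; apply: hmax_leq => _ /qresultP[i [j [iS jM _ ->]]].
by have := leq_hmax iS; have := ge_m j jM; lia.
Qed.

Lemma hmax_qresult (S M : seq nat) m : 0 < m <= hmax S -> m \in M ->
  (forall j, j \in M -> m <= j) -> hmax (qresult S M) = hmax S - m.
Proof.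
move=> /andP[m_gt0 le_mk] mM ge_m; apply/eqP; rewrite eqn_leq hmax_qresult_leq //.
apply: leq_hmax; apply/qresultP; exists (hmax S), m.
by split=> //; apply: hmax_mem; apply: leq_trans le_mk.
Qed.

Lemma mem_qresult_pred (S M : seq nat) i :
  1 \in M -> i \in S -> 0 < i -> i.-1 \in qresult S M.
Proof. by move=> oneM iS i_gt0; apply/qresultP; exists i, 1; rewrite subn1. Qed.

Lemma legal_qmoves (S M : seq nat) j : M \in qmoves S -> j \in M -> 0 < j <= hmax S.
Proof. by rewrite mem_filter => /andP[/and4P[_ _ /allP legal _] _] /legal. Qed.

Lemma qmoves_neq0 (S M : seq nat) : M \in qmoves S -> M != [::].
Proof. by rewrite mem_filter => /andP[/and4P[]]. Qed.

Lemma hmax_qresult_lt (S M : seq nat) : M \in qmoves S -> hmax (qresult S M) < hmax S.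
Proof.
move=> MS; have [j jM] : exists j, j \in M.
  by case: M MS => [/qmoves_neq0 //|j M _]; exists j; rewrite mem_head.
have /andP[j_gt0 le_jk] := legal_qmoves MS jM.
have ge_1 j' : j' \in M -> 1 <= j' by move/(legal_qmoves MS)/andP=> [].
by have := hmax_qresult_leq S ge_1; lia.
Qed.

Lemma grundy_fuel_stable f g S :
  hmax S < f -> hmax S < g -> grundy_fuel f S = grundy_fuel g S.
Proof.
elim: f g S => [|f IH] [|g] S //= lt_Sf lt_Sg; congr mex.
by apply/eq_in_map => M /hmax_qresult_lt lt_M; apply: IH; lia.
Qed.

Lemma grundyE S : grundy S = mex [seq grundy (qresult S M) | M <- qmoves S].
Proof.
by congr mex; apply/eq_in_map => M /hmax_qresult_lt lt_M; apply: grundy_fuel_stable.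
Qed.

Lemma sorted_subseq_iota (s : seq nat) m n :
  sorted ltn s -> {subset s <= iota m n} -> subseq s (iota m n).
Proof.
move=> s_sorted s_sub; apply/subseq_uniqP; first exact: iota_uniq.
apply: (irr_sorted_eq ltn_trans ltnn) => //.
  exact: sorted_filter ltn_trans _ _ (iota_ltn_sorted _ _).
by move=> x; rewrite mem_filter; case xs: (x \in s); rewrite //= s_sub.
Qed.

Lemma mem_subseqs (s t : seq nat) : subseq t s -> t \in subseqs s.
Proof.
elim: s t => [|x s IH] [|y t] //=; rewrite mem_cat.
  by rewrite IH // sub0seq.
by case: eqP => [->|_] sub_ts; rewrite ?(map_f (cons x)) ?orbT // IH.
Qed.

Lemma mem_qmoves (S M : seq nat) : allowedC' S M -> sorted ltn M -> M \in qmoves S.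
Proof.
move=> allowed M_sorted; rewrite mem_filter allowed; apply: mem_subseqs.
apply: sorted_subseq_iota => // j jM; move/and4P: allowed => [_ _ /allP legal _].
by rewrite mem_iota add1n; apply: legal.
Qed.

Lemma pair_qmoves (S : seq nat) a c : 0 < a < c -> c <= hmax S -> [:: a; c] \in qmoves S.
Proof.
move=> /andP[a_gt0 lt_ac] le_ck; apply: mem_qmoves; last by rewrite /= lt_ac.
rewrite /allowedC' /= /legal_move inE (ltn_eqF lt_ac) a_gt0 (ltn_trans a_gt0 lt_ac).
by rewrite (leq_trans (ltnW lt_ac) le_ck) le_ck.
Qed.

Lemma single_qmoves (S : seq nat) j : 0 < j <= hmax S ->
  (forall i, i \in S -> 0 < i -> j <= i) -> [:: j] \in qmoves S.
Proof.
move=> legal ge_j; apply: mem_qmoves => //.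
by rewrite /allowedC' /= /legal_move legal; apply/allP => i iS; apply/implyP/ge_j.
Qed.

Definition qnim (k : nat) (b : bool) : nat :=
  match k with
  | 0 | 1 => k
  | 2 => if b then 0 else 2
  | _ => if b then k.-1 else k
  end.

Definition qnim_of (S : seq nat) : nat := qnim (hmax S) ((hmax S).-1 \in S).

Definition qnim_options (S : seq nat) : seq nat :=
  [seq qnim_of (qresult S M) | M <- qmoves S].

Lemma qnim_leq k b : qnim k b <= k.
Proof. by case: k => [|[|[|k]]] //; case: b. Qed.

Lemma qnim_id k b : ~~ b || (k < 2) -> qnim k b = k.
Proof. by case: k => [|[|[|k]]] //; case: b. Qed.

Lemma qnim_ge3 k b : 2 < k -> qnim k b = if b then k.-1 else k.
Proof. by case: k => [|[|[|k]]]. Qed.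

Lemma hmax_top_pair (S : seq nat) m : 0 < m < hmax S ->
  hmax (qresult S [:: hmax S - m; hmax S]) = m.
Proof.
set k := hmax S => lt_mk; rewrite (@hmax_qresult _ _ (k - m)) ?mem_head //; try lia.
by move=> j; rewrite !inE => /orP[] /eqP->; rewrite ?leq_subr.
Qed.

Lemma pred_in_top_pair (S : seq nat) m : 1 < m < hmax S ->
  (m.-1 \in qresult S [:: hmax S - m; hmax S]) = ((hmax S).-1 \in S).
Proof.
set k := hmax S => /andP[m_gt1 lt_mk]; apply/idP/idP => [/qresultP[i [j [iS jM le_ji]]] | k1S].
  have le_ik : i <= k := leq_hmax iS; rewrite -!subn1 => eq_i.
  move: jM le_ji eq_i; rewrite !inE => /orP[] /eqP-> le_ji eq_i; last lia.
  by have <- : i = k - 1 by lia.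
by apply/qresultP; exists k.-1, (k - m); rewrite !inE eqxx; split=> //; lia.
Qed.

Lemma top_pair_option (S : seq nat) m : 0 < m < hmax S ->
  qnim m ((hmax S).-1 \in S) \in qnim_options S.
Proof.
move=> lt_mk; apply/mapP; exists [:: hmax S - m; hmax S]; first by apply: pair_qmoves; lia.
rewrite /qnim_of hmax_top_pair //; case: (ltngtP m 1) => [| m_gt1 | -> //]; first lia.
by rewrite pred_in_top_pair //; lia.
Qed.

Lemma single_top_option (S : seq nat) : 0 < hmax S ->
  (forall i, i \in S -> 0 < i -> hmax S <= i) -> 0 \in qnim_options S.
Proof.
move=> k_gt0 ge_k; apply/mapP; exists [:: hmax S].
  by apply: single_qmoves ge_k; rewrite k_gt0 /=.
rewrite /qnim_of (@hmax_qresult _ _ (hmax S)) ?k_gt0 ?leqnn ?mem_head ?subnn //.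
by move=> j; rewrite inE => /eqP->.
Qed.

Lemma low_pair_option (S : seq nat) : 2 < hmax S -> 0 \in qnim_options S.
Proof.
set k := hmax S => k_gt2; apply/mapP; exists [:: k - 2; k - 1].
  by apply: pair_qmoves; lia.
have hmax_opt : hmax (qresult S [:: k - 2; k - 1]) = 2.
  rewrite (@hmax_qresult _ _ (k - 2)) ?mem_head //; try lia.
  by move=> j; rewrite !inE => /orP[] /eqP->; lia.
rewrite /qnim_of hmax_opt /=; suff -> : 1 \in qresult S [:: k - 2; k - 1] by [].
have kS : k \in S by apply: hmax_mem; lia.
by apply/qresultP; exists k, (k - 1); rewrite !inE eqxx orbT; split=> //; lia.
Qed.

Lemma qnim_options_below (S : seq nat) u : u < qnim_of S -> u \in qnim_options S.
Proof.
rewrite /qnim_of; move def_k: (hmax S) => k.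
have top_pair m : 0 < m < k -> qnim m (k.-1 \in S) \in qnim_options S.
  by rewrite -def_k; apply: top_pair_option.
have [u0 | u_gt1 | ->] := ltngtP u 1 => lt_u.
- have -> : u = 0 by lia.
  have [k_gt2 | k_le2] := ltnP 2 k; first by apply: low_pair_option; rewrite def_k.
  apply: single_top_option => [|i iS i_gt0]; rewrite def_k.
    by case: k lt_u {def_k top_pair k_le2}.
  have le_ik : i <= k by rewrite -def_k leq_hmax.
  case: (leqP k i) => // lt_ik; have [k2 i1] : k = 2 /\ i = 1 by lia.
  by move: lt_u; rewrite k2 /= -i1 iS.
- move: lt_u; case k1S: (k.-1 \in S) => lt_u.
    have k_gt2 : 2 < k by case: k lt_u {def_k top_pair k1S} => [|[|[|k]]] /= lt_u; lia.
    have <- : qnim u.+1 true = u by rewrite qnim_ge3.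
    by rewrite -k1S; apply: top_pair; move: lt_u; rewrite qnim_ge3 // -subn1; lia.
  rewrite -(@qnim_id u false) // -k1S; apply: top_pair.
  by move: lt_u; rewrite qnim_id //; lia.
- have le_k := qnim_leq k (k.-1 \in S).
  by rewrite -(@qnim_id 1 (k.-1 \in S)) ?orbT //; apply: top_pair; lia.
Qed.

Lemma qnim_pred_true_neq k : 1 < k -> qnim k.-1 true != qnim k true.
Proof. by case: k => [|[|[|[|k]]]] //= _; rewrite neq_ltn ltnSn. Qed.

Lemma one_in_qmoves (S M : seq nat) :
  M \in qmoves S -> hmax S = 2 -> 1 \in S -> 1 \in M.
Proof.
move=> MS k2 oneS; apply/negPn/negP => oneNM.
have M_eq2 j : j \in M -> j = 2.
  move=> jM; have /andP[j_gt0 le_j2] := legal_qmoves MS jM; rewrite k2 in le_j2.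
  have j_neq1 : j != 1 by apply: contraNneq oneNM => <-.
  lia.
have M_neq0 := qmoves_neq0 MS.
move: MS; rewrite mem_filter => /andP[/and4P[_ M_uniq _ single] _].
case: M M_neq0 M_uniq single M_eq2 {oneNM} => [//|j [|j' M]] _ /=.
  by move=> _ /allP/(_ 1 oneS) /= le_j1 /(_ j (mem_head _ _)) j2; lia.
rewrite inE => /andP[/norP[/eqP j_neq_j' _] _] _ eq2.
have j2 := eq2 j (mem_head _ _).
have j'2 : j' = 2 by apply: eq2; rewrite !inE eqxx orbT.
by apply: j_neq_j'; rewrite j2 j'2.
Qed.

Lemma qnim_option_neq (S M : seq nat) :
  M \in qmoves S -> qnim_of (qresult S M) != qnim_of S.
Proof.
move=> MS; have lt_Kk := hmax_qresult_lt MS.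
have le_opt := qnim_leq (hmax (qresult S M)) ((hmax (qresult S M)).-1 \in qresult S M).
rewrite /qnim_of; move def_k: (hmax S) lt_Kk => k lt_Kk.
have [/andP[k1S k_gt1] | small] := boolP ((k.-1 \in S) && (1 < k)); last first.
  rewrite (@qnim_id k); first by rewrite neq_ltn (leq_ltn_trans le_opt lt_Kk).
  by move: small; rewrite negb_and -leqNgt.
rewrite k1S; case oneM: (1 \in M).
  have hmax_opt : hmax (qresult S M) = k.-1.
    rewrite (@hmax_qresult _ _ 1) ?def_k ?subn1 ?(ltnW k_gt1) //.
    by move=> j /(legal_qmoves MS)/andP[].
  by rewrite hmax_opt mem_qresult_pred ?qnim_pred_true_neq // -ltnS prednK // ltnW.
have ge_2 j : j \in M -> 2 <= j.
  move=> jM; have /andP[j_gt0 _] := legal_qmoves MS jM.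
  by rewrite ltn_neqAle j_gt0 andbT; apply: contraFneq oneM => ->.
have := hmax_qresult_leq S ge_2; rewrite def_k.
case: (ltngtP k 2) => [| k_gt2 | k2]; first lia.
  rewrite (@qnim_ge3 k) // neq_ltn => le_K; rewrite (leq_ltn_trans le_opt) //.
  by rewrite -subn1; lia.
by move: k1S; rewrite k2 => oneS; rewrite (one_in_qmoves MS) ?def_k in oneM.
Qed.

Lemma grundy_qnim (S : seq nat) : grundy S = qnim_of S.
Proof.
have [n] := ubnP (hmax S); elim: n S => // n IH S /ltnSE le_Sn.
rewrite grundyE.
have -> : [seq grundy (qresult S M) | M <- qmoves S] = qnim_options S.
  by apply/eq_in_map => M /hmax_qresult_lt lt_M /=; rewrite IH // (leq_trans lt_M).
apply: mex_eq => [u|]; first exact: qnim_options_below.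
by apply/mapP => -[M MS] /eqP; apply/negP; rewrite eq_sym qnim_option_neq.
Qed.

Lemma exceptional_caseE (S : seq nat) : uniq S ->
  perm_eq S [:: 1; 2] || perm_eq S [:: 0; 1; 2] = (hmax S == 2) && (1 \in S).
Proof.
move=> S_uniq; apply/idP/andP => [/orP[] /perm_mem eq_S | [/eqP k2 oneS]].
- by rewrite (eq_hmax eq_S) eq_S.
- by rewrite (eq_hmax eq_S) eq_S.
have twoS : 2 \in S by rewrite -k2 hmax_mem ?k2.
have le_2 x : x \in S -> x <= 2 by rewrite -k2; apply: leq_hmax.
apply/orP; case zeroS: (0 \in S); [right | left]; apply: uniq_perm => // x;
  rewrite !inE; apply/idP/idP.
- by move=> xS; have := le_2 x xS; case: x xS => [|[|[|x]]].
- by move=> /or3P[] /eqP->.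
- by move=> xS; have := le_2 x xS; case: x xS => [|[|[|x]]] //; rewrite zeroS.
- by move=> /orP[] /eqP->.
Qed.

Theorem lemma5 (S : seq nat) :
  S != [::] -> uniq S ->
  let k := hmax S in
  grundy S =
    (if perm_eq S [:: 1; 2] || perm_eq S [:: 0; 1; 2] then 0
     else if k == 1 then 1
     else if (k - 1) \in S then k - 1
     else k).
Proof.
move=> _ S_uniq /=; rewrite grundy_qnim /qnim_of exceptional_caseE // subn1.
by case: (hmax S) => [|[|[|k]]] //=; case: ifP.
Qed.
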